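(* In the setting described in the context, suppose the binary-flux assumption holds. Then the following are equivalent: (i) (class decomposition) for every $k\in K$ there exists $E^k\subset\bar J_n$ such that $k=\bigcup_{j\in E^k}\mathcal O^j$; (ii) there exists an optimal weight family; (iii) the family $\bar w^K=(\bar w^k)_{k\in K}$ defined by $\bar w^{j\to k}:=\frac{b_1}{b_2|\bar J^k_n|}\mathbb 1_{j\in\bar J^k_n}$, where $\bar J^k_n:=\arg\max_{j\in\bar J_n}\Phi^{j\to k}_{\mathrm{disc}}$, is an optimal weight family.
   Context: Let $\mathcal O$ be a finite set of sample types and $K$ a finite set of classes with $|K|\ge2$, each class $k\in K$ identified with a nonempty subset of $\mathcal O$, the classes forming a partition of $\mathcal O$ (so ''$o\in k$'' means type $o$ has class $k$). Let $\bar J_n$ be a finite nonempty index set (selected $n$-element subsets of input species), and for each $o\in\mathcal O$ and $j\in\bar J_n$ let $\int_o\Phi^j\ge0$ be a given number (the integrated flux of $j$ during presentation of a sample of type $o$). Let $b_1,b_2>0$. Flux discrepancy: $\Phi^{j\to k}_{\mathrm{disc}}:=\frac{1}{|k|}\sum_{o\in k}\int_o\Phi^j-\frac{1}{|K|-1}\sum_{k'\ne k}\frac{1}{|k'|}\sum_{o\in k'}\int_o\Phi^j$. An optimal weight family is $q^K=(q^k)_{k\in K}$ with $q^k=(q^{j\to k})_{j\in\bar J_n}$, $q^{j\to k}\ge0$, $\sum_jq^{j\to k}=\frac{b_1}{b_2}$, such that for all $k\in K$ and $o\in\mathcal O$: $\sum_{j\in\bar J_n}q^{j\to k}\int_o\Phi^j>0$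 if and only if $o\in k$. Binary-flux assumption: there is $p>0$ such that $\int_o\Phi^j\in\{0,p\}$ for all $j\in\bar J_n$, $o\in\mathcal O$; setting $\mathcal O^j:=\{o\in\mathcal O:\int_o\Phi^j=p\}$, all the sets $\mathcal O^j$, $j\in\bar J_n$, have the same cardinality. *)

From mathcomp Require Import all_boot all_order all_algebra.
Set Implicit Arguments. Unset Strict Implicit. Unset Printing Implicit Defensive.
Import Order.TTheory GRing.Theory Num.Theory.
Local Open Scope ring_scope.

Section Defs.
Variables (R : realFieldType) (O K J : finType).
(* cls o = the class of sample type o; the classes partition O. *)
Variable cls : O -> K.
(* flux o j = \int_o \Phi^j *)
Variable flux : O -> J -> R.

Definition class_set (k : K) : {set O} := [set o | cls o == k].

Definition disc (j : J) (k : K) : R :=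
  (#|class_set k|%:R)^-1 * \sum_(o in class_set k) flux o j
  - (#|K|%:R - 1)^-1 *
    \sum_(k' in K | k' != k) (#|class_set k'|%:R)^-1 * \sum_(o in class_set k') flux o j.

Definition optimal_weight_family (b1 b2 : R) (q : K -> J -> R) : Prop :=
  [/\ forall k j, 0 <= q k j,
      forall k, \sum_(j in J) q k j = b1 / b2 &
      forall k o, (0 < \sum_(j in J) q k j * flux o j) <-> cls o = k].

Definition Oj (p : R) (j : J) : {set O} := [set o | flux o j == p].

Definition Jbar (k : K) : {set J} := [set j | [forall j', disc j' k <= disc j k]].

Definition wbar (b1 b2 : R) (k : K) (j : J) : R :=
  if j \in Jbar k then b1 / (b2 * #|Jbar k|%:R) else 0.
End Defs.

From mathcomp Require Import all_boot all_order all_algebra.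
From mathcomp Require Import ring.
Set Implicit Arguments. Unset Strict Implicit. Unset Printing Implicit Defensive.
Import Order.TTheory GRing.Theory Num.Theory.
Local Open Scope ring_scope.

(* With binary fluxes a type o responds to the weights q exactly when some
   j with q j > 0 has o in O^j, so the classes of an optimal family are
   unions of the sets O^j.  Conversely, if every class is such a union, let
   J^k be the set of j with O^j inside the class k.  For j in J^k the
   discrepancy is p |O^j| / |k|; for any other j only the part of O^j inside
   k counts positively, so it is strictly smaller.  Since all O^j have the
   same size, the argmax set of the discrepancy is exactly J^k, and the
   uniform weights on J^k select precisely the class k. *)

Section BinaryFlux.
Variables (R : realFieldType) (O J : finType) (flux : O -> J -> R) (p : R).
Hypothesis p_gt0 : 0 < p.
Hypothesis flux_bin : forall o j, flux o j = 0 \/ flux o j = p.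

Lemma flux_ge0 o j : 0 <= flux o j.
Proof. by case: (flux_bin o j) => ->; rewrite ?lexx ?ltW. Qed.

Lemma sum_flux_card (A : {set O}) j :
  \sum_(o in A) flux o j = #|A :&: Oj flux p j|%:R * p.
Proof.
rewrite mulr_natl -sumr_const big_mkcond [RHS]big_mkcond /=.
apply: eq_bigr => o _; rewrite in_setI [o \in Oj _ _ _]inE.
by case: (o \in A) => //=; case: (flux_bin o j) => ->; rewrite ?eqxx // eq_sym gt_eqF.
Qed.

Lemma weighted_flux_gt0P (q : J -> R) o : (forall j, 0 <= q j) ->
  (0 < \sum_(j in J) q j * flux o j) <-> exists2 j, 0 < q j & o \in Oj flux p j.
Proof.
move=> q_ge0; have term_ge0 j : 0 <= q j * flux o j by rewrite mulr_ge0 ?flux_ge0.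
split.
- rewrite lt_def => /andP[/eqP sum_neq0 _].
  have [j /andP[_]] := psumr_neq0P (fun j _ => term_ge0 j) sum_neq0.
  case: (flux_bin o j) => fj; rewrite fj ?mulr0 ?ltxx // pmulr_lgt0 // => qj_gt0.
  by exists j; rewrite // inE fj.
- move=> [j qj_gt0]; rewrite inE => /eqP fj; rewrite (bigD1 j) //= ltr_pwDl //.
    by rewrite fj mulr_gt0.
  by rewrite sumr_ge0.
Qed.

End BinaryFlux.

Section UniformWeights.
Variables (R : realFieldType) (O K J : finType) (cls : O -> K).
Variables (flux : O -> J -> R) (b1 b2 : R).
Hypotheses (b1_gt0 : 0 < b1) (b2_gt0 : 0 < b2).

Lemma wbar_ge0 k j : 0 <= wbar cls flux b1 b2 k j.
Proof.
by rewrite /wbar; case: ifP => // _; rewrite divr_ge0 ?mulr_ge0 ?(ltW b1_gt0) ?(ltW b2_gt0).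
Qed.

Lemma wbar_gt0 k j : (0 < wbar cls flux b1 b2 k j) = (j \in Jbar cls flux k).
Proof.
rewrite /wbar; case: ifP => [j_in|]; last by rewrite ltxx.
by rewrite divr_gt0 // mulr_gt0 // ltr0n; apply/card_gt0P; exists j.
Qed.

Lemma sum_wbar k :
  (exists j, j \in Jbar cls flux k) -> \sum_j wbar cls flux b1 b2 k j = b1 / b2.
Proof.
move=> [j j_in]; rewrite /wbar -big_mkcond sumr_const -mulr_natl.
have card_neq0 : (#|Jbar cls flux k|%:R : R) != 0.
  by rewrite pnatr_eq0 -lt0n; apply/card_gt0P; exists j.
by field; rewrite card_neq0 gt_eqF.
Qed.

End UniformWeights.

Section Classes.
Variables (R : realFieldType) (O K J : finType) (cls : O -> K).
Variables (flux : O -> J -> R) (p : R).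
Hypothesis p_gt0 : 0 < p.
Hypothesis flux_bin : forall o j, flux o j = 0 \/ flux o j = p.

Definition Jinside (k : K) : {set J} := [set j | Oj flux p j \subset class_set cls k].

Lemma optimal_class_decomposition b1 b2 q k :
  optimal_weight_family cls flux b1 b2 q ->
  class_set cls k = \bigcup_(j in [set j | 0 < q k j]) Oj flux p j.
Proof.
move=> [q_ge0 _ q_sel]; apply/setP => o; rewrite inE.
apply/eqP/bigcupP => [/q_sel/(weighted_flux_gt0P p_gt0 flux_bin _ (q_ge0 k)) [j qj oj]|].
  by exists j => //; rewrite inE.
move=> [j]; rewrite inE => qj oj; apply/q_sel.
by apply/(weighted_flux_gt0P p_gt0 flux_bin _ (q_ge0 k)); exists j.
Qed.

Lemma class_decomposition_Jinside k (E : {set J}) :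
  class_set cls k = \bigcup_(j in E) Oj flux p j ->
  class_set cls k = \bigcup_(j in Jinside k) Oj flux p j.
Proof.
move=> decE; apply/setP => o; apply/idP/bigcupP => [|[j]]; last first.
  by rewrite inE => /subsetP; apply.
rewrite {1}decE => /bigcupP [j jE oj]; exists j => //.
by rewrite inE decE (bigcup_sup j jE).
Qed.

Lemma disc_le_card k j :
  disc cls flux j k <=
    #|class_set cls k|%:R^-1 * (#|class_set cls k :&: Oj flux p j|%:R * p).
Proof.
have K_ge1 : (1 <= #|K|)%N by apply/card_gt0P; exists k.
rewrite /disc (sum_flux_card p_gt0 flux_bin) lerBlDr lerDl mulr_ge0 //.
  by rewrite invr_ge0 subr_ge0 ler1n.
rewrite sumr_ge0 // => k' _; rewrite mulr_ge0 ?invr_ge0 ?sumr_ge0 //.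
move=> o _; exact: (flux_ge0 p_gt0 flux_bin).
Qed.

Lemma disc_Jinside k j : j \in Jinside k ->
  disc cls flux j k = #|class_set cls k|%:R^-1 * (#|Oj flux p j|%:R * p).
Proof.
rewrite inE => Oj_sub.
rewrite /disc (sum_flux_card p_gt0 flux_bin) (setIidPr Oj_sub).
rewrite big1 ?mulr0 ?subr0 // => k' /andP[_ k'_neq_k].
rewrite (sum_flux_card p_gt0 flux_bin) (_ : _ :&: _ = set0) ?cards0 ?mul0r ?mulr0 //.
apply/setP => o; rewrite in_set0 in_setI; apply/negP => /andP[].
rewrite inE => /eqP cls_o /(subsetP Oj_sub); rewrite inE cls_o.
by rewrite (negbTE k'_neq_k).
Qed.

Lemma disc_lt_notJinside k j : (0 < #|class_set cls k|)%N -> j \notin Jinside k ->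
  disc cls flux j k < #|class_set cls k|%:R^-1 * (#|Oj flux p j|%:R * p).
Proof.
rewrite inE => class_gt0 Oj_nsub; apply: le_lt_trans (disc_le_card k j) _.
rewrite ltr_pM2l ?invr_gt0 ?ltr0n // ltr_pM2r // ltr_nat.
apply: proper_card; rewrite properE subsetIr; apply: contra Oj_nsub.
by move=> /subsetP Oj_sub; apply/subsetP => o /Oj_sub /setIP [].
Qed.

Lemma Jbar_Jinside k :
  (forall j j', #|Oj flux p j| = #|Oj flux p j'|) -> (0 < #|class_set cls k|)%N ->
  (exists j, j \in Jinside k) -> Jbar cls flux k = Jinside k.
Proof.
move=> card_Oj class_gt0 [j0 j0_in]; apply/setP => j; rewrite inE.
apply/forallP/idP => [max_j | j_in j'].
  apply: contraLR (max_j j0) => j_out; rewrite -ltNge (disc_Jinside j0_in).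
  by rewrite (card_Oj j0 j) disc_lt_notJinside.
rewrite (disc_Jinside j_in) (card_Oj j j').
have [j'_in | j'_out] := boolP (j' \in Jinside k); first by rewrite disc_Jinside.
by rewrite ltW // disc_lt_notJinside.
Qed.

Lemma wbar_optimal (b1 b2 : R) : 0 < b1 -> 0 < b2 ->
  (forall k, exists o, cls o = k) ->
  (forall j j', #|Oj flux p j| = #|Oj flux p j'|) ->
  (forall k, class_set cls k = \bigcup_(j in Jinside k) Oj flux p j) ->
  optimal_weight_family cls flux b1 b2 (wbar cls flux b1 b2).
Proof.
move=> b1_gt0 b2_gt0 class_ne card_Oj dec.
have class_gt0 k : (0 < #|class_set cls k|)%N.
  by have [o cls_o] := class_ne k; apply/card_gt0P; exists o; rewrite inE cls_o.
have Jinside_ne k : exists j, j \in Jinside k.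
  have [o cls_o] := class_ne k.
  have : o \in class_set cls k by rewrite inE cls_o.
  by rewrite dec => /bigcupP [j j_in _]; exists j.
have Jbar_eq k : Jbar cls flux k = Jinside k.
  exact: Jbar_Jinside card_Oj (class_gt0 k) (Jinside_ne k).
split=> [k j | k | k o]; first exact: wbar_ge0.
  by apply: sum_wbar => //; rewrite Jbar_eq.
rewrite (weighted_flux_gt0P p_gt0 flux_bin _ (wbar_ge0 _ _ b1_gt0 b2_gt0 k)).
have -> : (cls o = k) <-> o \in class_set cls k by rewrite inE; split=> [->|/eqP].
rewrite dec; split=> [[j] | /bigcupP [j j_in o_in]].
  by rewrite wbar_gt0 // Jbar_eq => j_in o_in; apply/bigcupP; exists j.
by exists j; rewrite // wbar_gt0 // Jbar_eq.
Qed.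

End Classes.

Theorem theorem13 (R : realFieldType) (O K J : finType) (cls : O -> K)
    (flux : O -> J -> R) (b1 b2 p : R) :
  (forall k : K, exists o : O, cls o = k) ->
  (1 < #|K|)%N ->
  (0 < #|J|)%N ->
  (forall o j, 0 <= flux o j) ->
  0 < b1 -> 0 < b2 ->
  (* binary-flux assumption *)
  0 < p ->
  (forall o j, flux o j = 0 \/ flux o j = p) ->
  (forall j j' : J, #|Oj flux p j| = #|Oj flux p j'|) ->
  ((forall k : K, exists E : {set J},
       class_set cls k = \bigcup_(j in E) Oj flux p j)
   <-> (exists q : K -> J -> R, optimal_weight_family cls flux b1 b2 q))
  /\
  ((exists q : K -> J -> R, optimal_weight_family cls flux b1 b2 q)
   <-> optimal_weight_family cls flux b1 b2 (wbar cls flux b1 b2)).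
Proof.
move=> class_ne _ _ _ b1_gt0 b2_gt0 p_gt0 flux_bin card_Oj.
have optimal_dec q : optimal_weight_family cls flux b1 b2 q ->
    forall k, exists E : {set J}, class_set cls k = \bigcup_(j in E) Oj flux p j.
  move=> q_opt k; eexists.
  exact: (optimal_class_decomposition p_gt0 flux_bin k q_opt).
have dec_wbar :
    (forall k, exists E : {set J}, class_set cls k = \bigcup_(j in E) Oj flux p j) ->
    optimal_weight_family cls flux b1 b2 (wbar cls flux b1 b2).
  move=> dec; apply: (wbar_optimal p_gt0 flux_bin) => // k.
  by have [E decE] := dec k; apply: class_decomposition_Jinside decE.
split; split.
- by move=> /dec_wbar w_opt; exists (wbar cls flux b1 b2).
- by move=> [q /optimal_dec].
- by move=> [q /optimal_dec/dec_wbar].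
- by move=> w_opt; exists (wbar cls flux b1 b2).
Qed.
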